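(* For each $n$, let $\delta_1,\ldots,\delta_n>0$ be expected degrees with $\delta_i\delta_j\le \sum_{k=1}^n\delta_k$ for all $i,j$, and let $A$ be the adjacency matrix of a random undirected graph on $\{1,\ldots,n\}$ drawn from the Chung-Lu model: $A$ is symmetric, $A(i,i)=0$, and the entries $\{A(i,j):1\le i<j\le n\}$ are independent with $A(i,j)\sim\mathrm{Bernoulli}(P(i,j))$, where $P(i,j)=\frac{\delta_i\delta_j}{\sum_{k=1}^n\delta_k}$. Let $d_i=\sum_{j=1}^n A(i,j)$ be the degree of node $i$, and set $m_1=\sum_{i=1}^n d_i$, $m_2=\sum_{i=1}^n d_i^2$, $\mu_1=\sum_{i=1}^n\delta_i$, $\mu_2=\sum_{i=1}^n\delta_i^2$. Suppose that, as $n\to\infty$, $\frac{1}{n}\sum_{i=1}^n\delta_i\to\infty$ and $\frac{\sum_i\delta_i^2}{\sum_i\delta_i}=\omega(\log^2 n)$. Then for every $\epsilon>0$, $$P\left[\left|\frac{m_1}{\mu_1}-1\right|>\epsilon\right]\to 0\quad\text{and}\quad P\left[\left|\frac{m_2}{\mu_2}-1\right|>\epsilon\right]\to 0\qquad (n\to\infty).$$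
   Context: The expected degrees $\delta_i=\delta_i^{(n)}$ may depend on $n$; all limits are as $n\to\infty$. $f(n)=\omega(g(n))$ means $f(n)/g(n)\to\infty$. *)

From HB Require Import structures.
From mathcomp Require Import all_boot all_order all_algebra.
From mathcomp Require Import all_classical all_reals all_analysis.
Set Implicit Arguments. Unset Strict Implicit. Unset Printing Implicit Defensive.
Import Order.TTheory GRing.Theory Num.Theory.
Local Open Scope ring_scope.

Section ChungLu.
Variable R : realType.
Variable n : nat.
Variable delta : 'I_n -> R.

Definition mu1 : R := \sum_(k < n) delta k.
Definition mu2 : R := \sum_(k < n) delta k ^+ 2.

Definition PCL (i j : 'I_n) : R := delta i * delta j / mu1.

(* A sample: one boolean per ordered pair; only pairs with i < j are used
   (the others are forced to be false by the weight below). *)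
Definition config := {ffun 'I_n * 'I_n -> bool}.

Definition adj (w : config) (i j : 'I_n) : R :=
  if (i < j)%N then (w (i, j))%:R
  else if (j < i)%N then (w (j, i))%:R else 0.

Definition weight (w : config) : R :=
  \prod_(p : 'I_n * 'I_n)
     (if (p.1 < p.2)%N then (if w p then PCL p.1 p.2 else 1 - PCL p.1 p.2)
      else (if w p then 0 else 1)).

Definition Pr (E : pred config) : R := \sum_(w : config | E w) weight w.

Definition deg (w : config) (i : 'I_n) : R := \sum_(j < n) adj w i j.
Definition m1 (w : config) : R := \sum_(i < n) deg w i.
Definition m2 (w : config) : R := \sum_(i < n) deg w i ^+ 2.

End ChungLu.

(* Write X_e for the independent Bernoulli(p_e) edge indicators.  Each degree is a
   linear form in the centred indicators,
     d_i - delta_i = sum_e [i in e] (X_e - p_e) - delta_i^2 / mu_1,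
   whose second moment is at most sum_e [i in e] p_e + (delta_i^2 / mu_1)^2 <= 2 delta_i,
   because delta_i^2 <= mu_1.  Likewise m_1 - mu_1 = 2 sum_e (X_e - p_e) - mu_2 / mu_1 has
   second moment at most 6 mu_1 (using mu_2^2 <= mu_1^3), so Chebyshev gives
   P[|m_1/mu_1 - 1| > eps] <= 6 / (eps^2 mu_1).  For m_2, AM-GM in the form
   |d^2 - delta^2| <= s delta^2 + (1 + 1/s) (d - delta)^2 with s = eps/2 reduces the event
   |m_2 - mu_2| > eps mu_2 to a large value of sum_i (d_i - delta_i)^2, whose mean is at
   most 2 mu_1; Markov bounds its probability by O(mu_1 / mu_2).  Both bounds vanish,
   since mu_1 >= mu_1 / n -> oo and mu_2 / mu_1 >= mu_2 / (mu_1 ln^2 n) -> oo. *)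

From HB Require Import structures.
From mathcomp Require Import all_boot all_order all_algebra.
From mathcomp Require Import all_classical all_reals all_analysis.
From mathcomp Require Import ring lra.
Import Order.TTheory GRing.Theory Num.Theory numFieldNormedType.Exports.
Set Implicit Arguments.
Unset Strict Implicit.
Unset Printing Implicit Defensive.
Local Open Scope classical_set_scope.
Local Open Scope ring_scope.

Section RealInequalities.
Variable R : realFieldType.

Lemma ltr_norm_div_sub1 (x mu eps : R) : 0 < mu ->
  (eps < `|x / mu - 1|) = (eps * mu < `|x - mu|).
Proof.
move=> mu_gt0; have -> : x / mu - 1 = (x - mu) / mu by field; rewrite gt_eqF.
by rewrite normrM normfV (gtr0_norm mu_gt0) ltr_pdivlMr.
Qed.

Lemma sqr_sub_sqr_le (x y s : R) : 0 < s ->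
  `|x ^+ 2 - y ^+ 2| <= s * y ^+ 2 + (1 + s^-1) * (x - y) ^+ 2.
Proof.
move=> s_gt0; set d := x - y; have -> : x ^+ 2 - y ^+ 2 = 2 * y * d + d ^+ 2 by rewrite /d; ring.
have amgm_lo : 0 <= (s * y - d) ^+ 2 / s by rewrite divr_ge0 ?sqr_ge0 ?ltW.
have amgm_hi : 0 <= (s * y + d) ^+ 2 / s by rewrite divr_ge0 ?sqr_ge0 ?ltW.
have rhsE : s * y ^+ 2 + (1 + s^-1) * d ^+ 2 = s * y ^+ 2 + d ^+ 2 / s + d ^+ 2 by ring.
rewrite ler_norml rhsE; apply/andP; split.
- have : (s * y + d) ^+ 2 / s = s * y ^+ 2 + 2 * y * d + d ^+ 2 / s by field; rewrite gt_eqF.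
  have := sqr_ge0 d; lra.
- have : (s * y - d) ^+ 2 / s = s * y ^+ 2 - 2 * y * d + d ^+ 2 / s by field; rewrite gt_eqF.
  lra.
Qed.

Lemma sum_sqr_sub_le (I : finType) (x y : I -> R) (s : R) : 0 < s ->
  `|\sum_i x i ^+ 2 - \sum_i y i ^+ 2| <=
  s * \sum_i y i ^+ 2 + (1 + s^-1) * \sum_i (x i - y i) ^+ 2.
Proof.
move=> s_gt0; rewrite -sumrB !mulr_sumr -big_split /=.
by apply: le_trans (ler_norm_sum _ _ _) (ler_sum _ _) => i _; apply: sqr_sub_sqr_le.
Qed.

End RealInequalities.

Section BernoulliProduct.
Variables (R : realFieldType) (I : finType) (q : I -> R).
Hypotheses (q_ge0 : forall i, 0 <= q i) (q_le1 : forall i, q i <= 1).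

Local Notation sample := {ffun I -> bool}.

Definition bern_weight (w : sample) : R :=
  \prod_i (if w i then q i else 1 - q i).

Definition expect (X : sample -> R) : R := \sum_w bern_weight w * X w.

Definition prob (E : pred sample) : R := \sum_(w | E w) bern_weight w.

Definition centered (w : sample) (i : I) : R := (w i)%:R - q i.

Lemma bern_weight_ge0 w : 0 <= bern_weight w.
Proof.
by apply: prodr_ge0 => i _; case: (w i); rewrite ?subr_ge0.
Qed.

Lemma prob_ge0 E : 0 <= prob E.
Proof. by apply: sumr_ge0 => w _; apply: bern_weight_ge0. Qed.

Lemma eq_expect X Y : X =1 Y -> expect X = expect Y.
Proof. by move=> XY; apply: eq_bigr => w _; rewrite XY. Qed.

Lemma expectD X Y : expect (fun w => X w + Y w) = expect X + expect Y.
Proof. by rewrite -big_split; apply: eq_bigr => w _; rewrite mulrDr. Qed.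

Lemma expectZ c X : expect (fun w => c * X w) = c * expect X.
Proof. by rewrite mulr_sumr; apply: eq_bigr => w _; rewrite mulrCA. Qed.

Lemma expect_sum (J : finType) (X : J -> sample -> R) :
  expect (fun w => \sum_j X j w) = \sum_j expect (X j).
Proof. by rewrite exchange_big; apply: eq_bigr => w _; rewrite mulr_sumr. Qed.

Lemma ler_expect X Y : (forall w, X w <= Y w) -> expect X <= expect Y.
Proof. by move=> XY; apply: ler_sum => w _; rewrite ler_wpM2l ?bern_weight_ge0. Qed.

Lemma expect_prod (h : I -> bool -> R) :
  expect (fun w => \prod_i h i (w i)) =
  \prod_i (q i * h i true + (1 - q i) * h i false).
Proof.
rewrite /expect (eq_bigr (fun w : sample => \prod_i ((if w i then q i else 1 - q i) * h i (w i))));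
  last by move=> w _; rewrite big_split.
rewrite -(bigA_distr_bigA (fun i b => (if b then q i else 1 - q i) * h i b)).
by apply: eq_bigr => i _; rewrite big_bool addrC.
Qed.

Lemma sum_bern_weight : \sum_w bern_weight w = 1.
Proof.
have := expect_prod (fun _ _ => 1).
rewrite big1_eq /expect (eq_bigr (fun _ => 1)) => [|i _]; last by rewrite !mulr1 addrC subrK.
by rewrite big1_eq; under eq_bigr do rewrite mulr1.
Qed.

Lemma expect_cst c : expect (fun _ => c) = c.
Proof. by rewrite /expect -mulr_suml sum_bern_weight mul1r. Qed.

Lemma expect_centered_mul i j :
  expect (fun w => centered w i * centered w j) = (i == j)%:R * (q i * (1 - q i)).
Proof.
pose h k (b : bool) :=
  (if k == i then b%:R - q i else 1) * (if k == j then b%:R - q j else 1).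
have -> : (fun w => centered w i * centered w j) = (fun w => \prod_k h k (w k)).
  by apply: funext => w; rewrite big_split /= -!big_mkcond /= !big_pred1_eq.
rewrite (expect_prod h) (bigD1 i) //= /h eqxx.
have [<-|ij] := eqVneq i j; last first.
  by rewrite /=; ring.
rewrite big1 => [|k /negbTE ki]; last first.
  by rewrite ki !mulr1 addrC subrK.
by rewrite /=; ring.
Qed.

Lemma expect_lin_sqr (c : I -> R) :
  expect (fun w => (\sum_i c i * centered w i) ^+ 2) =
  \sum_i c i ^+ 2 * (q i * (1 - q i)).
Proof.
have -> : (fun w => (\sum_i c i * centered w i) ^+ 2) =
    (fun w => \sum_i \sum_j c i * c j * (centered w i * centered w j)).
  apply: funext => w; rewrite expr2 big_distrlr /=.
  by apply: eq_bigr => i _; apply: eq_bigr => j _; ring.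
rewrite expect_sum; apply: eq_bigr => i _.
rewrite expect_sum (bigD1 i) //= big1 => [|j /negbTE ji]; last first.
  by rewrite expectZ expect_centered_mul eq_sym ji mul0r mulr0.
by rewrite expectZ expect_centered_mul eqxx mul1r addr0 expr2.
Qed.

Lemma expect_lin_sqr_le (c : I -> R) :
  expect (fun w => (\sum_i c i * centered w i) ^+ 2) <= \sum_i c i ^+ 2 * q i.
Proof.
rewrite expect_lin_sqr; apply: ler_sum => i _.
by rewrite ler_wpM2l ?sqr_ge0 // ler_piMr // lerBlDr lerDl.
Qed.

Lemma expect_sqr_lin_sub_le (c : I -> R) (b : R) :
  expect (fun w => (\sum_i c i * centered w i - b) ^+ 2) <=
  2 * \sum_i c i ^+ 2 * q i + 2 * b ^+ 2.
Proof.
apply: (@le_trans _ _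
    (expect (fun w => 2 * (\sum_i c i * centered w i) ^+ 2 + 2 * b ^+ 2))).
  apply: ler_expect => w; set L := \sum_i _.
  by have := sqr_ge0 (L + b); rewrite !expr2; nra.
by rewrite expectD expectZ expect_cst lerD2r ler_wpM2l ?expect_lin_sqr_le.
Qed.

Lemma markov (E : pred sample) (X : sample -> R) (a : R) : 0 < a ->
  (forall w, 0 <= X w) -> (forall w, E w -> a <= X w) -> prob E <= expect X / a.
Proof.
move=> a_gt0 X_ge0 EX; rewrite ler_pdivlMr // mulr_suml.
apply: (@le_trans _ _ (\sum_(w | E w) bern_weight w * X w)).
  by apply: ler_sum => w Ew; rewrite ler_wpM2l ?bern_weight_ge0 ?EX.
rewrite [leRHS](bigID E) /= lerDl.
by apply: sumr_ge0 => w _; rewrite mulr_ge0 ?bern_weight_ge0.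
Qed.

End BernoulliProduct.

Section Incidence.
Variables (R : nzRingType) (n : nat).

Definition incident (i : 'I_n) (e : 'I_n * 'I_n) : R :=
  ((e.1 < e.2)%N && ((e.1 == i) || (e.2 == i)))%:R.

Lemma sum_incident_mul i (F : 'I_n * 'I_n -> R) :
  \sum_e incident i e * F e =
  \sum_(j : 'I_n) ((if (i < j)%N then F (i, j) else 0) + (if (j < i)%N then F (j, i) else 0)).
Proof.
pose G (a b : 'I_n) : R := if a == i then if (i < b)%N then F (i, b) else 0 else 0.
pose H (a b : 'I_n) : R := if b == i then if (a < i)%N then F (a, i) else 0 else 0.
rewrite (eq_bigr (fun e => G e.1 e.2 + H e.1 e.2)); last first.
  move=> [a b] _; rewrite /incident /G /H /=.
  have [->|ai] := eqVneq a i; have [->|bi] := eqVneq b i;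
    rewrite ?ltnn /= ?andbT ?addr0 ?add0r ?mul0r //; by case: ltnP; rewrite ?mul1r ?mul0r.
rewrite big_split /= -(pair_bigA _ G) -(pair_bigA _ H) big_split /=; congr (_ + _).
  rewrite (bigD1 i) //= [X in _ + X]big1 ?addr0 => [|a /negbTE ai]; last first.
    by rewrite big1 // => b _; rewrite /G ai.
  by apply: eq_bigr => b _; rewrite /G eqxx.
by apply: eq_bigr => a _; rewrite -big_mkcond big_pred1_eq.
Qed.

Lemma sum_incident e : \sum_i incident i e = 2 * ((e.1 < e.2)%N)%:R.
Proof.
rewrite /incident; case: ltnP => [lt12|_]; last by rewrite big1 ?mulr0.
rewrite (bigD1 e.1) //= (bigD1 e.2) ?neq_ltn ?lt12 ?orbT //= !eqxx orbT big1 ?addr0.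
  by rewrite mulr1.
by move=> i /andP[/negbTE i1 /negbTE i2]; rewrite eq_sym i1 eq_sym i2.
Qed.

Lemma sum_incident_sqr e : (\sum_i incident i e) ^+ 2 = 2 * \sum_i incident i e.
Proof. by rewrite sum_incident; case: (_ < _)%N; rewrite /= ?mulr1 ?mulr0 ?expr0n // expr2. Qed.

Lemma incident_sqr i e : incident i e ^+ 2 = incident i e.
Proof. by rewrite /incident; case: (_ && _); rewrite ?expr1n ?expr0n. Qed.

End Incidence.

Arguments incident {R n} i e.

Section ChungLu.
Variables (R : realType) (n : nat) (delta : 'I_n -> R).
Hypotheses (delta_gt0 : forall i, 0 < delta i)
  (delta_mul_le : forall i j, delta i * delta j <= mu1 delta).
Implicit Types (w : config n) (i j : 'I_n) (e : 'I_n * 'I_n).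

Lemma delta_le_mu1 i : delta i <= mu1 delta.
Proof. by rewrite /mu1 (bigD1 i) //= lerDl sumr_ge0 // => j _; rewrite ltW. Qed.

Lemma mu1_ge0 : 0 <= mu1 delta.
Proof. by apply: sumr_ge0 => i _; rewrite ltW. Qed.

Lemma mu2_ge0 : 0 <= mu2 delta.
Proof. by apply: sumr_ge0 => i _; apply: sqr_ge0. Qed.

Lemma mu1_gt0 i : 0 < mu1 delta.
Proof. exact: lt_le_trans (delta_gt0 i) (delta_le_mu1 i). Qed.

Lemma mu2_gt0 i : 0 < mu2 delta.
Proof.
rewrite /mu2 (bigD1 i) //= ltr_pwDl ?exprn_gt0 //.
by apply: sumr_ge0 => j _; rewrite sqr_ge0.
Qed.

Lemma mu2_sqr_le : mu2 delta ^+ 2 <= mu1 delta ^+ 3.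
Proof.
(* mu2^2 = sum_(i,j) (delta_i delta_j)^2 <= mu1 * sum_(i,j) delta_i delta_j *)
have -> : mu1 delta ^+ 3 = mu1 delta * \sum_i \sum_j delta i * delta j.
  by rewrite -big_distrlr exprS expr2.
rewrite /mu2 expr2 big_distrlr /= mulr_sumr; apply: ler_sum => i _.
rewrite mulr_sumr; apply: ler_sum => j _.
by rewrite -exprMn expr2 ler_wpM2r ?delta_mul_le // mulr_ge0 ?ltW ?delta_gt0.
Qed.

Lemma PCLC i j : PCL delta i j = PCL delta j i.
Proof. by rewrite /PCL (mulrC (delta i)). Qed.

Lemma PCL_le1 i j : PCL delta i j <= 1.
Proof. by rewrite /PCL ler_pdivrMr ?mul1r ?delta_mul_le ?(mu1_gt0 i). Qed.

(* [weight] makes the pairs (a, b) with a >= b Bernoulli(0) variables. *)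
Definition edge_prob (e : 'I_n * 'I_n) : R :=
  if (e.1 < e.2)%N then PCL delta e.1 e.2 else 0.

Lemma edge_prob_ge0 e : 0 <= edge_prob e.
Proof.
rewrite /edge_prob; case: ifP => // _.
by rewrite /PCL divr_ge0 ?mulr_ge0 ?ltW ?delta_gt0 ?(mu1_gt0 e.1).
Qed.

Lemma edge_prob_le1 e : edge_prob e <= 1.
Proof. by rewrite /edge_prob; case: ifP => _; rewrite ?PCL_le1. Qed.

Lemma weight_bern_weight w : weight delta w = bern_weight edge_prob w.
Proof.
apply: eq_bigr => e _; rewrite /edge_prob.
by case: ifP => // _; case: (w e); rewrite ?subr0.
Qed.

Lemma Pr_prob E : Pr delta E = prob edge_prob E.
Proof. by apply: eq_bigr => w _; rewrite weight_bern_weight. Qed.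

Lemma Pr_ge0 E : 0 <= Pr delta E.
Proof. by rewrite Pr_prob; exact: (prob_ge0 edge_prob_ge0 edge_prob_le1 E). Qed.

Lemma deg_incident w i : deg R w i = \sum_e incident i e * (w e)%:R.
Proof.
rewrite sum_incident_mul; apply: eq_bigr => j _; rewrite /adj.
by case: ltngtP; rewrite ?addr0 ?add0r.
Qed.

Lemma sum_incident_edge_prob i :
  \sum_e incident i e * edge_prob e = delta i - delta i ^+ 2 / mu1 delta.
Proof.
have -> : delta i - delta i ^+ 2 / mu1 delta = \sum_(j | j != i) PCL delta i j.
  have sum_PCL : \sum_j PCL delta i j = delta i.
    by rewrite /PCL -mulr_suml -mulr_sumr mulfK // gt_eqF // (mu1_gt0 i).
  by rewrite -{1}sum_PCL (bigD1 i) //= addrC /PCL expr2 addrK.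
rewrite sum_incident_mul (bigD1 i) //= ltnn !add0r; apply: eq_bigr => j ji.
rewrite /edge_prob /=; case: ltngtP => [_|_|/val_inj eq_ij]; rewrite ?addr0 ?add0r //.
  by rewrite PCLC.
by rewrite eq_ij eqxx in ji.
Qed.

Lemma deg_sub_delta w i : deg R w i - delta i =
  \sum_e incident i e * centered edge_prob w e - delta i ^+ 2 / mu1 delta.
Proof.
rewrite deg_incident /centered; under [in RHS]eq_bigr do rewrite mulrBr.
by rewrite sumrB sum_incident_edge_prob; ring.
Qed.

Lemma m1_sub_mu1 w : m1 R w - mu1 delta =
  \sum_e (\sum_i incident i e) * centered edge_prob w e - mu2 delta / mu1 delta.
Proof.
rewrite -sumrB; under eq_bigr do rewrite deg_sub_delta.
by rewrite sumrB exchange_big /= /mu2 mulr_suml; under [in RHS]eq_bigr do rewrite mulr_suml.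
Qed.

Lemma sqr_mu2_div_mu1_le : (mu2 delta / mu1 delta) ^+ 2 <= mu1 delta.
Proof.
have [->|mu1_neq0] := eqVneq (mu1 delta) 0; first by rewrite invr0 mulr0 expr0n.
have mu1_pos : 0 < mu1 delta by rewrite lt0r mu1_neq0 mu1_ge0.
by rewrite expr_div_n ler_pdivrMr ?exprn_gt0 // -exprS mu2_sqr_le.
Qed.

Lemma expect_sqr_deg_sub_delta i :
  expect edge_prob (fun w => (deg R w i - delta i) ^+ 2) <= 2 * delta i.
Proof.
rewrite (eq_expect _ (fun w => congr1 (fun x => x ^+ 2) (deg_sub_delta w i))).
apply: le_trans (expect_sqr_lin_sub_le edge_prob_ge0 edge_prob_le1 _ _) _.
under eq_bigr do rewrite incident_sqr.
rewrite sum_incident_edge_prob.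
have b_ge0 : 0 <= delta i ^+ 2 / mu1 delta by rewrite divr_ge0 ?sqr_ge0 ?ltW ?(mu1_gt0 i).
have b_le1 : delta i ^+ 2 / mu1 delta <= 1.
  by rewrite ler_pdivrMr ?mul1r ?expr2 ?delta_mul_le ?(mu1_gt0 i).
have : (delta i ^+ 2 / mu1 delta) ^+ 2 <= delta i ^+ 2 / mu1 delta.
  by rewrite expr2 ler_piMr.
lra.
Qed.

Lemma expect_sqr_m1_sub_mu1 :
  expect edge_prob (fun w => (m1 R w - mu1 delta) ^+ 2) <= 6 * mu1 delta.
Proof.
rewrite (eq_expect _ (fun w => congr1 (fun x => x ^+ 2) (m1_sub_mu1 w))).
apply: le_trans (expect_sqr_lin_sub_le edge_prob_ge0 edge_prob_le1 _ _) _.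
have deg_sum_le : \sum_e (\sum_i incident i e) ^+ 2 * edge_prob e <= 2 * mu1 delta.
  under eq_bigr do rewrite sum_incident_sqr -mulrA mulr_suml.
  rewrite -mulr_sumr exchange_big /= ler_wpM2l // /mu1 ler_sum // => i _.
  by rewrite sum_incident_edge_prob lerBlDr lerDl divr_ge0 ?sqr_ge0 ?ltW ?(mu1_gt0 i).
have := sqr_mu2_div_mu1_le; lra.
Qed.

Hypothesis n_gt0 : (0 < n)%N.
Let i0 : 'I_n := Ordinal n_gt0.

Lemma m1_concentration eps : 0 < eps ->
  Pr delta (fun w => eps < `|m1 R w / mu1 delta - 1|) <= 6 / eps ^+ 2 / mu1 delta.
Proof.
move=> eps_gt0; have mu1_pos := mu1_gt0 i0.
rewrite Pr_prob; apply: le_trans (markov edge_prob_ge0 edge_prob_le1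
  (X := fun w => (m1 R w - mu1 delta) ^+ 2) (a := (eps * mu1 delta) ^+ 2) _ _ _) _.
- by rewrite exprn_gt0 ?mulr_gt0.
- by move=> w; apply: sqr_ge0.
- move=> w; rewrite ltr_norm_div_sub1 // => /ltW; rewrite ler_normr.
  have : 0 <= eps * mu1 delta by rewrite mulr_ge0 ?ltW.
  by move=> ge0 /orP[] dev; rewrite !expr2; nra.
apply: le_trans (ler_wpM2r _ expect_sqr_m1_sub_mu1) _; first by rewrite invr_ge0 sqr_ge0.
by rewrite le_eqVlt; apply/orP; left; apply/eqP; field; rewrite !gt_eqF.
Qed.

Lemma m2_concentration eps : 0 < eps ->
  Pr delta (fun w => eps < `|m2 R w / mu2 delta - 1|) <=
  4 * (eps + 2) / eps ^+ 2 / (mu2 delta / mu1 delta).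
Proof.
move=> eps_gt0; have mu1_pos := mu1_gt0 i0; have mu2_pos := mu2_gt0 i0.
pose k := 1 + (eps / 2)^-1.
have k_gt0 : 0 < k by rewrite addr_gt0 ?invr_gt0 ?divr_gt0.
rewrite Pr_prob; apply: le_trans (markov edge_prob_ge0 edge_prob_le1
  (X := fun w => \sum_i (deg R w i - delta i) ^+ 2)
  (a := eps / 2 * mu2 delta / k) _ _ _) _.
- by rewrite !mulr_gt0 ?invr_gt0.
- by move=> w; apply: sumr_ge0 => i _; apply: sqr_ge0.
- move=> w; rewrite ltr_norm_div_sub1 // ler_pdivrMr // mulrC => dev.
  have half_gt0 : 0 < eps / 2 by rewrite divr_gt0.
  have := sum_sqr_sub_le (fun i => deg R w i) delta half_gt0.
  rewrite -/k -/(m2 R w) -/(mu2 delta); lra.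
have expect_le : expect edge_prob (fun w => \sum_i (deg R w i - delta i) ^+ 2) <= 2 * mu1 delta.
  rewrite expect_sum /mu1 mulr_sumr; apply: ler_sum => i _.
  exact: expect_sqr_deg_sub_delta.
apply: le_trans (ler_wpM2r _ expect_le) _; first by rewrite invr_ge0 ltW ?mulr_gt0 ?invr_gt0.
by rewrite le_eqVlt; apply/orP; left; apply/eqP; rewrite /k; field; rewrite !gt_eqF ?addr_gt0.
Qed.

End ChungLu.

Section Asymptotics.
Variable R : realType.
Implicit Types (delta : forall n, 'I_n -> R) (u v : nat -> R).

Lemma cvg0_le_div u v (C : R) : v @ \oo --> +oo ->
  (\forall k \near \oo, 0 <= u k <= C / v k) -> u @ \oo --> 0.
Proof.
move=> v_oo uv; apply: (squeeze_cvgr uv); first exact: cvg_cst.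
have v_gt0 : \forall k \near \oo, 0 < v k by exact: (cvgryPgt _).1 v_oo 0.
rewrite -(mulr0 C); apply: cvgMr.
by apply/(gtr0_cvgV0 v_gt0).
Qed.

Lemma cvgy_mu1 delta : (forall n i, 0 < delta n i) ->
  (fun n => mu1 (delta n) / n%:R) @ \oo --> +oo -> (fun n => mu1 (delta n)) @ \oo --> +oo.
Proof.
move=> delta_gt0; apply: ger_cvgy; near=> n.
have n_ge1 : (1 <= n)%N by near: n; exact: nbhs_infty_ge.
by rewrite ler_pdivrMr ?ltr0n // ler_peMr ?ler1n ?(mu1_ge0 (delta_gt0 n)).
Unshelve. all: by end_near.
Qed.

Lemma cvgy_mu2_div_mu1 delta : (forall n i, 0 < delta n i) ->
  (fun n => mu2 (delta n) / mu1 (delta n) / ln (n%:R : R) ^+ 2) @ \oo --> +oo ->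
  (fun n => mu2 (delta n) / mu1 (delta n)) @ \oo --> +oo.
Proof.
move=> delta_gt0; apply: ger_cvgy; near=> n.
have e_le_n : expR 1 <= n%:R :> R by near: n; exact: nbhs_infty_ger.
have ln_ge1 : 1 <= ln (n%:R : R).
  by rewrite -[leLHS](expRK 1) ler_ln ?posrE ?expR_gt0 // (lt_le_trans (expR_gt0 1)).
have ratio_ge0 : 0 <= mu2 (delta n) / mu1 (delta n).
  by rewrite divr_ge0 ?mu2_ge0 ?(mu1_ge0 (delta_gt0 n)).
by rewrite ler_pdivrMr ?exprn_gt0 ?(lt_le_trans ltr01) // ler_peMr // expr_ge1 // (le_trans ler01).
Unshelve. all: by end_near.
Qed.

End Asymptotics.

Theorem theorem2 (R : realType) (delta : forall n : nat, 'I_n -> R)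
  (hpos : forall n (i : 'I_n), 0 < delta n i)
  (hbound : forall n (i j : 'I_n), delta n i * delta n j <= mu1 (delta n))
  (havg : (fun n : nat => mu1 (delta n) / n%:R) @ \oo --> +oo)
  (hratio : (fun n : nat => (mu2 (delta n) / mu1 (delta n)) / (ln (n%:R : R)) ^+ 2)
              @ \oo --> +oo) :
  forall eps : R, 0 < eps ->
    ((fun n : nat => Pr (delta n)
        (fun w => eps < `| @m1 R n w / mu1 (delta n) - 1 |)) @ \oo --> (0 : R)) /\
    ((fun n : nat => Pr (delta n)
        (fun w => eps < `| @m2 R n w / mu2 (delta n) - 1 |)) @ \oo --> (0 : R)).
Proof.
move=> eps eps_gt0; split.
- apply: (cvg0_le_div (C := 6 / eps ^+ 2) (cvgy_mu1 hpos havg)); near=> n.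
  have n_gt0 : (0 < n)%N by near: n; exact: nbhs_infty_gt.
  by rewrite Pr_ge0 ?m1_concentration.
- apply: (cvg0_le_div (C := 4 * (eps + 2) / eps ^+ 2) (cvgy_mu2_div_mu1 hpos hratio)).
  near=> n; have n_gt0 : (0 < n)%N by near: n; exact: nbhs_infty_gt.
  by rewrite Pr_ge0 ?m2_concentration.
Unshelve. all: by end_near.
Qed.
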